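(* Let $G$ be an infinite locally finite graph and $D$ a finite connected graph. Identify $G$ with one of its copies $G\times\{x_0\}$ ($x_0\in V(D)$) in the Cartesian product $G\square D$. Then $G$ is faithful to $G\square D$.
   Context: A ray is a one-way infinite path; two rays of a graph $H$ are equivalent in $H$ if for every finite $S\subseteq V(H)$ some component of $H-S$ contains tails of both; the classes are the ends of $H$. A subgraph $A$ of $B$ is faithful to $B$ if (i) every end of $B$ contains a ray of $A$, and (ii) any two rays of $A$ are equivalent in $A$ if and only if they are equivalent in $B$. *)

From Stdlib Require Import List Relations Arith.

Record graph := Graph {
  vert :> Type;
  adj : vert -> vert -> Prop;
  adj_sym : forall x y, adj x y -> adj y x;
  adj_irrefl : forall x, ~ adj x x
}.

Arguments adj {g} _ _.

Definition is_ray (H : graph) (r : nat -> H) : Prop :=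
  (forall n m, r n = r m -> n = m) /\ (forall n, adj (r n) (r (S n))).

(* x and y lie in the same component of H - S (S a finite set given as a list):
   both avoid S and are joined by a finite walk avoiding S. *)
Definition adj_avoid (H : graph) (S : list H) (x y : H) : Prop :=
  adj x y /\ ~ In x S /\ ~ In y S.

Definition same_comp_avoid (H : graph) (S : list H) (x y : H) : Prop :=
  ~ In x S /\ ~ In y S /\ clos_refl_trans H (adj_avoid H S) x y.

Definition ray_equiv (H : graph) (r1 r2 : nat -> H) : Prop :=
  forall S : list H, exists k : nat,
    forall n m, k <= n -> k <= m -> same_comp_avoid H S (r1 n) (r2 m).

Definition faithful (A B : graph) (f : A -> B) : Prop :=
  (* (i) every end of B contains a ray of A *)
  (forall r : nat -> B, is_ray B r ->
     exists r' : nat -> A, is_ray A r' /\ ray_equiv B (fun n => f (r' n)) r) /\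
  (forall r1 r2 : nat -> A, is_ray A r1 -> is_ray A r2 ->
     (ray_equiv A r1 r2 <-> ray_equiv B (fun n => f (r1 n)) (fun n => f (r2 n)))).

Definition locally_finite (G : graph) : Prop :=
  forall v : G, exists l : list G, forall w, adj v w -> In w l.

Definition infinite_graph (G : graph) : Prop :=
  ~ exists l : list G, forall v : G, In v l.

Definition finite_graph (G : graph) : Prop :=
  exists l : list G, forall v : G, In v l.

Definition connected (G : graph) : Prop :=
  forall x y : G, clos_refl_trans G adj x y.

Definition cart_adj (G D : graph) (p q : G * D) : Prop :=
  (adj (fst p) (fst q) /\ snd p = snd q) \/ (fst p = fst q /\ adj (snd p) (snd q)).

Lemma cart_adj_sym G D p q : cart_adj G D p q -> cart_adj G D q p.
Proof.
  unfold cart_adj; intros [[H1 H2]|[H1 H2]]; [left|right]; split;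
  try apply adj_sym; auto.
Qed.

Lemma cart_adj_irrefl G D p : ~ cart_adj G D p p.
Proof.
  unfold cart_adj; intros [[H _]|[_ H]]; eapply adj_irrefl; eauto.
Qed.

Definition cart_prod (G D : graph) : graph :=
  Graph (G * D) (cart_adj G D) (cart_adj_sym G D) (cart_adj_irrefl G D).

Definition copy_emb (G D : graph) (x0 : D) : G -> cart_prod G D :=
  fun v => (v, x0).

From Stdlib Require Import List Relations Arith.
From Stdlib Require Import Lia Classical IndefiniteDescription.

(** Walks in the copy [G x {x0}] are walks in [G □ D], and projecting a walk of
    [G □ D] to its first coordinate gives a walk of [G]; a finite separator [S]
    of [G] corresponds to the finite separator [S x V(D)] of [G □ D], and a
    separator of [G □ D] meets only finitely many fibres [{g} x D], each of
    which is connected.  This gives (ii).  For (i), a ray of [G □ D] visits each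
    fibre only finitely often because [D] is finite, so its projection to [G]
    is a walk visiting every vertex finitely often; keeping only the last visit
    to each vertex extracts a ray of [G], whose copy is joined to the original
    ray inside the fibres. *)

Lemma clos_rt_map {A B : Type} (R : relation A) (R' : relation B) (f : A -> B) :
  (forall x y, R x y -> clos_refl_trans B R' (f x) (f y)) ->
  forall x y, clos_refl_trans A R x y -> clos_refl_trans B R' (f x) (f y).
Proof.
  intros Hstep x y Hxy; induction Hxy; eauto using rt_refl, rt_trans.
Qed.

Lemma adj_avoid_walk_sym (H : graph) (S : list H) (x y : H) :
  clos_refl_trans H (adj_avoid H S) x y -> clos_refl_trans H (adj_avoid H S) y x.
Proof.
  induction 1 as [x y (Hxy & Hx & Hy)| |]; eauto using rt_refl, rt_trans.
  apply rt_step; repeat split; auto using adj_sym.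
Qed.

Lemma not_In_map_fst {A B : Type} (S : list (A * B)) (p : A * B) :
  ~ In (fst p) (map fst S) -> ~ In p S.
Proof. intros Hp Hin; exact (Hp (in_map fst S p Hin)). Qed.

Lemma injective_eventually_avoids {T : Type} (r : nat -> T) :
  (forall n m, r n = r m -> n = m) ->
  forall l : list T, exists K, forall n, K <= n -> ~ In (r n) l.
Proof.
  intros Hinj l; induction l as [|x l [K HK]].
  - exists 0; simpl; auto.
  - destruct (classic (exists n, r n = x)) as [[n0 Hn0]|Hno].
    + exists (max K (S n0)); intros n Hn [Hx|Hin].
      * subst x; apply Hinj in Hx; lia.
      * apply (HK n); [lia|auto].
    + exists K; intros n Hn [Hx|Hin]; [apply Hno; eauto|apply (HK n); auto].
Qed.

Lemma ray_tail_in_one_comp (H : graph) (r : nat -> H) (S : list H) :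
  is_ray H r ->
  exists K, forall a b, K <= a -> K <= b -> same_comp_avoid H S (r a) (r b).
Proof.
  intros [Hinj Hadj]; destruct (injective_eventually_avoids r Hinj S) as [K HK].
  assert (Hforward : forall d a, K <= a ->
            clos_refl_trans H (adj_avoid H S) (r a) (r (a + d))).
  { induction d as [|d IH]; intros a Ha.
    - rewrite Nat.add_0_r; apply rt_refl.
    - apply rt_trans with (r (a + d)); [auto|].
      rewrite Nat.add_succ_r; apply rt_step.
      repeat split; [apply Hadj|apply HK; lia|apply HK; lia]. }
  exists K; intros a b Ha Hb; repeat split; [apply HK; lia|apply HK; lia|].
  destruct (le_lt_dec a b).
  - replace b with (a + (b - a)) by lia; auto.
  - apply adj_avoid_walk_sym; replace a with (b + (a - b)) by lia; auto.
Qed.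

Lemma last_witness (P : nat -> Prop) (K : nat) :
  forall n0, P n0 -> (forall m, P m -> m < K) ->
  exists t, n0 <= t /\ P t /\ forall m, t < m -> ~ P m.
Proof.
  induction K as [|K IH]; intros n0 Hn0 Hbound.
  - specialize (Hbound _ Hn0); lia.
  - destruct (classic (P K)) as [HK|HK].
    + exists K; split; [specialize (Hbound _ Hn0); lia|].
      split; [exact HK|]; intros m Hm Pm; specialize (Hbound _ Pm); lia.
    + apply IH; [exact Hn0|]; intros m Pm; specialize (Hbound _ Pm).
      destruct (Nat.eq_dec m K); [subst; contradiction|lia].
Qed.

Section WalkContainsRay.

Variables (H : graph) (w : nat -> H).
Hypothesis w_finite_visits : forall s, exists K, forall m, w m = w s -> m < K.
Hypothesis w_walk : forall n, w n = w (S n) \/ adj (w n) (w (S n)).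

Lemma walk_last_visit (s : nat) :
  exists t, s <= t /\ w t = w s /\ forall m, t < m -> w m <> w s.
Proof.
  destruct (w_finite_visits s) as [K HK].
  exact (last_witness (fun m => w m = w s) K s eq_refl HK).
Qed.

Lemma walk_contains_ray :
  exists t : nat -> nat, (forall i, i <= t i) /\ is_ray H (fun i => w (t i)).
Proof.
  destruct (functional_choice _ walk_last_visit) as [last_visit Hlast].
  (* Start at the last visit of [w 0]; then jump to the last visit of the
     vertex entered right after the current one. *)
  set (t i := Nat.iter i (fun k => last_visit (S k)) (last_visit 0)).
  assert (Ht_last : forall i m, t i < m -> w m <> w (t i)).
  { intros i m Hm.
    assert (Hs : exists s, t i = last_visit s) by (destruct i; simpl; eauto).
    destruct Hs as [s Hs]; rewrite Hs in *.
    destruct (Hlast s) as (_ & Heq & Hafter); rewrite Heq; auto. }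
  assert (Ht_step : forall i, t i < t (S i) /\ w (t (S i)) = w (S (t i))).
  { intros i; simpl; destruct (Hlast (S (t i))) as (Hle & Heq & _); split; [lia|exact Heq]. }
  assert (Ht_mono : forall i j, i < j -> t i < t j).
  { intros i j Hij; induction Hij as [|j _ IH];
      [apply Ht_step|specialize (Ht_step j); lia]. }
  exists t; split; [|split].
  - induction i as [|i IH]; [lia|]; specialize (Ht_step i); lia.
  - intros i j Heq; destruct (Nat.lt_total i j) as [Hij|[Hij|Hij]]; [|exact Hij|].
    + exfalso; apply (Ht_last i (t j)); auto.
    + exfalso; apply (Ht_last j (t i)); auto.
  - intros i; cbv beta; destruct (Ht_step i) as [_ ->].
    destruct (w_walk (t i)) as [Heq|Hadj]; [|exact Hadj].
    exfalso; apply (Ht_last i (S (t i))); [lia|now symmetry].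
Qed.

End WalkContainsRay.

Lemma fibre_connected_avoid (G D : graph) (S : list (cart_prod G D)) (g : G) :
  connected D -> ~ In g (map fst S) ->
  forall a b : D, clos_refl_trans _ (adj_avoid (cart_prod G D) S) (g, a) (g, b).
Proof.
  intros Hconn Hg a b.
  apply (clos_rt_map adj _ (fun d => (g, d))); [|apply Hconn].
  intros c d Hcd; apply rt_step.
  repeat split; [right; auto|apply not_In_map_fst; auto|apply not_In_map_fst; auto].
Qed.

Lemma product_ray_finite_fibres (G D : graph) (r : nat -> cart_prod G D) :
  finite_graph D -> is_ray _ r ->
  forall g : G, exists K, forall m, fst (r m) = g -> m < K.
Proof.
  intros [lD HlD] [Hinj _] g.
  destruct (injective_eventually_avoids r Hinj (map (fun d => (g, d)) lD)) as [K HK].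
  exists K; intros m Hm; destruct (le_lt_dec K m) as [Hle|]; [exfalso|auto].
  apply (HK m Hle), in_map_iff; exists (snd (r m)); split; [|apply HlD].
  rewrite <- Hm; destruct (r m); reflexivity.
Qed.

Lemma product_ray_equiv_copy_ray (G D : graph) (x0 : D) (r : nat -> cart_prod G D) :
  finite_graph D -> connected D -> is_ray _ r ->
  exists r' : nat -> G, is_ray G r' /\
    ray_equiv (cart_prod G D) (fun n => copy_emb G D x0 (r' n)) r.
Proof.
  intros HD Hconn Hr.
  set (w n := fst (r n)).
  destruct (walk_contains_ray G w) as (t & Ht_ge & Hray).
  { intros s; apply (product_ray_finite_fibres G D r HD Hr). }
  { intros n; destruct (proj2 Hr n) as [[Hadj _]|[Heq _]]; [right|left]; auto. }
  exists (fun i => w (t i)); split; [exact Hray|].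
  intros S.
  destruct (injective_eventually_avoids _ (proj1 Hray) (map fst S)) as [K1 HK1].
  destruct (ray_tail_in_one_comp _ r S Hr) as [K2 HK2].
  exists (max K1 K2); intros n m Hn Hm.
  destruct (HK2 (t n) m) as (_ & Hrm & Hwalk); [specialize (Ht_ge n); lia|lia|].
  repeat split; [apply not_In_map_fst, HK1; lia|exact Hrm|].
  apply rt_trans with (w (t n), snd (r (t n))).
  - apply fibre_connected_avoid; [exact Hconn|apply HK1; lia].
  - unfold w; destruct (r (t n)); exact Hwalk.
Qed.

Lemma ray_equiv_copy (G D : graph) (x0 : D) (r1 r2 : nat -> G) :
  ray_equiv G r1 r2 ->
  ray_equiv (cart_prod G D) (fun n => copy_emb G D x0 (r1 n))
                            (fun n => copy_emb G D x0 (r2 n)).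
Proof.
  intros Hequiv S; destruct (Hequiv (map fst S)) as [k Hk]; exists k.
  intros n m Hn Hm; destruct (Hk n m Hn Hm) as (H1 & H2 & Hwalk).
  repeat split; [apply not_In_map_fst; auto|apply not_In_map_fst; auto|].
  apply (clos_rt_map (adj_avoid G (map fst S)) _ (copy_emb G D x0)); [|exact Hwalk].
  intros x y (Hxy & Hx & Hy); apply rt_step.
  repeat split; [left; auto|apply not_In_map_fst; auto|apply not_In_map_fst; auto].
Qed.

Lemma ray_equiv_proj (G D : graph) (p1 p2 : nat -> cart_prod G D) :
  finite_graph D -> ray_equiv (cart_prod G D) p1 p2 ->
  ray_equiv G (fun n => fst (p1 n)) (fun n => fst (p2 n)).
Proof.
  intros [lD HlD] Hequiv L.
  assert (Hout : forall p : G * D, ~ In p (list_prod L lD) -> ~ In (fst p) L).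
  { intros [g d] Hp Hg; apply Hp, in_prod; auto. }
  destruct (Hequiv (list_prod L lD)) as [k Hk]; exists k.
  intros n m Hn Hm; destruct (Hk n m Hn Hm) as (H1 & H2 & Hwalk).
  repeat split; [apply Hout; auto|apply Hout; auto|].
  apply (clos_rt_map (adj_avoid (cart_prod G D) (list_prod L lD)) _ fst); [|exact Hwalk].
  intros p q ([[Hadj _]|[-> _]] & Hp & Hq); [|apply rt_refl].
  apply rt_step; repeat split; auto.
Qed.

Theorem lemma17 (G D : graph) (x0 : D) :
  infinite_graph G -> locally_finite G ->
  finite_graph D -> connected D ->
  faithful G (cart_prod G D) (copy_emb G D x0).
Proof.
  intros _ _ HD Hconn; split.
  - intros r Hr; exact (product_ray_equiv_copy_ray G D x0 r HD Hconn Hr).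
  - intros r1 r2 _ _; split.
    + apply ray_equiv_copy.
    + exact (ray_equiv_proj G D _ _ HD).
Qed.
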